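(* Let $(a_i)_{i\ge1}$ be a real sequence. Then $(a_i)_{i\ge1}$ is convex if and only if $$\sum_{i=1}^n\big(a_{\lfloor p_i\rfloor}-a_{\lfloor q_i\rfloor}\big)\le\sum_{i=1}^n\big(\{q_i\}\,\Delta a_{\lfloor q_i\rfloor}-\{p_i\}\,\Delta a_{\lfloor p_i\rfloor}\big)$$ holds for all $n\ge2$ and all $(p_1,\dots,p_n),(q_1,\dots,q_n)\in[1,\infty)^n$ with $(p_1,\dots,p_n)\prec(q_1,\dots,q_n)$.
   Context: $\Delta a_i=a_{i+1}-a_i$; a sequence is convex if $(\Delta a_i)_{i\ge1}$ is non-decreasing. $\lfloor x\rfloor$ is the floor and $\{x\}=x-\lfloor x\rfloor$ the fractional part. For $x,y\in\mathbb{R}^n$, with $x_{[1]}\ge\dots\ge x_{[n]}$ and $y_{[1]}\ge\dots\ge y_{[n]}$ the components in decreasing order, $x\prec y$ ($y$ majorizes $x$) means $\sum_{i=1}^k x_{[i]}\le\sum_{i=1}^k y_{[i]}$ for $k=1,\dots,n-1$ and $\sum_{i=1}^n x_i=\sum_{i=1}^n y_i$. *)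

From mathcomp Require Import all_boot all_order all_algebra.
From mathcomp Require Import reals.
Set Implicit Arguments. Unset Strict Implicit. Unset Printing Implicit Defensive.
Import Order.TTheory GRing.Theory Num.Theory.
Local Open Scope ring_scope.

(* Sequences (a_i)_{i>=1} are functions a : nat -> R; a 0 is irrelevant. *)
Definition Delta (R : realType) (a : nat -> R) (i : nat) : R := a i.+1 - a i.

Definition convex_seq (R : realType) (a : nat -> R) : Prop :=
  forall i : nat, (1 <= i)%N -> Delta a i <= Delta a i.+1.

Definition flo (R : realType) (x : R) : nat := `|Num.floor x|%N.
Definition fracpart (R : realType) (x : R) : R := x - (Num.floor x)%:~R.

(* components of x in decreasing order x_[1] >= ... >= x_[n] (0-indexed) *)
Definition decr (R : realType) (n : nat) (x : 'I_n -> R) : seq R :=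
  sort (fun u v : R => v <= u) [seq x i | i <- enum 'I_n].

Definition majorized (R : realType) (n : nat) (x y : 'I_n -> R) : Prop :=
  (forall k : nat, (1 <= k <= n.-1)%N ->
     \sum_(i < k) (decr x)`_i <= \sum_(i < k) (decr y)`_i)
  /\ \sum_(i < n) x i = \sum_(i < n) y i.

From mathcomp Require Import all_boot all_order all_algebra.
From mathcomp Require Import reals.
From mathcomp Require Import ring lra zify.
Set Implicit Arguments. Unset Strict Implicit. Unset Printing Implicit Defensive.
Import Order.TTheory GRing.Theory Num.Theory.
Local Open Scope ring_scope.

(* The sum of the inequality rearranges to [\sum_i f (p i) <= \sum_i f (q i)]
   for the piecewise-linear interpolant [f x = a_(floor x) + {x} Delta a_(floor x)]
   of [a].  For convex [a], on [x >= 1] the function [f] is an affine function plus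
   the hinges [max (x - k - 2) 0] weighted by the second differences
   [Delta a_(k+2) - Delta a_(k+1) >= 0].  For a hinge at [t], the sum of
   [max (p_i - t) 0] equals [\sum_(i<k) (p_[i] - t)] for some [k]; majorization
   bounds this by [\sum_(i<k) (q_[i] - t)], which is at most the corresponding
   sum for [q].  Conversely,
   [(i+1, i+1) \prec (i+2, i)] and [f] agrees with [a] at integers, so the
   inequality for this pair reads [2 a_(i+1) <= a_(i+2) + a_i]. *)

Lemma sum_pos_part_sorted (R : realDomainType) (s : seq R) (t : R) :
  sorted >=%R s ->
  exists2 k, (k <= size s)%N &
    \sum_(v <- s) Num.max (v - t) 0 = \sum_(i < k) (s`_i - t).
Proof.
elim: s => [|v s IHs] /= sorted_vs.
  by exists 0%N => //; rewrite big_nil big_ord0.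
case: (leP v t) => [le_vt | lt_tv]; last first.
  have [k le_ks sum_s] := IHs (path_sorted sorted_vs).
  by exists k.+1 => //; rewrite big_cons sum_s big_ord_recl /= max_l // subr_ge0 ltW.
exists 0%N => //; rewrite big_ord0 big1_seq // => w /andP[_].
have /allP le_sv : all (>=%R v) s.
  by apply: order_path_min sorted_vs; apply: ge_trans.
rewrite inE => /predU1P[-> | /le_sv /= le_wv]; apply/max_idPr; rewrite subr_le0 //.
exact: le_trans le_wv le_vt.
Qed.

Section MajorizationInterpolation.
Variable R : realType.
Implicit Types (a : nat -> R) (x : R).

Lemma flo_truncn x : 0 <= x -> flo x = Num.truncn x.
Proof. by move=> x_ge0; rewrite truncn_floor x_ge0. Qed.

Lemma natr_flo x : 0 <= x -> ((flo x)%:R : R) = (Num.floor x)%:~R.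
Proof.
move=> x_ge0; have floor_x_ge0 : 0 <= Num.floor x by rewrite floor_ge0.
by rewrite /flo -[in RHS](gez0_abs floor_x_ge0).
Qed.

Lemma fracpartE x : 0 <= x -> fracpart x = x - (flo x)%:R.
Proof. by move=> x_ge0; rewrite /fracpart natr_flo. Qed.

Lemma flo_nat (m : nat) : flo (m%:R : R) = m.
Proof. by rewrite flo_truncn ?natrK. Qed.

Lemma fracpart_nat (m : nat) : fracpart (m%:R : R) = 0.
Proof. by rewrite fracpartE // flo_nat subrr. Qed.

Definition interp a x := a (flo x) + fracpart x * Delta a (flo x).

Lemma interp_nat a (m : nat) : interp a m%:R = a m.
Proof. by rewrite /interp flo_nat fracpart_nat mul0r addr0. Qed.

Lemma sum_interpE a n (p q : 'I_n -> R) :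
  (\sum_(i < n) (a (flo (p i)) - a (flo (q i)))
     <= \sum_(i < n) (fracpart (q i) * Delta a (flo (q i))
                      - fracpart (p i) * Delta a (flo (p i))))
  = (\sum_(i < n) interp a (p i) <= \sum_(i < n) interp a (q i)).
Proof. by rewrite !sumrB !big_split /=; apply/idP/idP => ?; lra. Qed.

Lemma second_difference_expansion a (j : nat) (r : R) :
  a 1%N + Delta a 1 * (j%:R + r)
    + \sum_(k < j) (Delta a k.+2 - Delta a k.+1) * (j%:R + r - k%:R - 1)
  = a j.+1 + r * Delta a j.+1.
Proof.
elim: j r => [|j IHj] r; first by rewrite big_ord0 addr0 add0r mulrC.
have shift (s : R) : j.+1%:R + s = j%:R + (s + 1) by rewrite -natr1; ring.
rewrite big_ord_recr /=; under eq_bigr => k _ do rewrite shift.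
by rewrite shift addrA IHj /Delta; ring.
Qed.

Lemma interp_hinge_expansion a x (N : nat) : 1 <= x -> (flo x <= N.+1)%N ->
  interp a x = a 1%N + Delta a 1 * (x - 1)
    + \sum_(k < N) (Delta a k.+2 - Delta a k.+1) * Num.max (x - k.+2%:R) 0.
Proof.
move=> x_ge1 le_flo_N; have x_ge0 : 0 <= x by lra.
have flo_x_gt0 : (0 < flo x)%N by rewrite flo_truncn // truncn_gt0.
have le_flo_x : (flo x)%:R <= x by rewrite flo_truncn // truncn_le.
have lt_x_flo1 : x < (flo x).+1%:R by rewrite flo_truncn // truncnS_gt.
rewrite /interp fracpartE //; move: le_flo_N flo_x_gt0 le_flo_x lt_x_flo1.
case: (flo x) => [//|j] /[!ltnS] le_jN _ le_jx lt_xj.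
rewrite -(second_difference_expansion a j (x - j.+1%:R)).
have -> : x - 1 = j%:R + (x - j.+1%:R) by rewrite -natr1; ring.
congr (_ + _); rewrite -(subnKC le_jN) big_split_ord /= [X in _ = _ + X]big1.
  rewrite addr0; apply: eq_bigr => k _; rewrite max_l; first by rewrite -!natr1; ring.
  by rewrite subr_ge0 (le_trans _ le_jx) // ler_nat ltnS ltn_ord.
move=> k _; have : (j <= j + k)%N := leq_addr k j; rewrite -(ler_nat R) => le_j_jk.
by rewrite max_r ?mulr0 // subr_le0 -!natr1; lra.
Qed.

Lemma size_decr n (x : 'I_n -> R) : size (decr x) = n.
Proof. by rewrite size_sort size_map size_enum_ord. Qed.

Lemma sorted_decr n (x : 'I_n -> R) : sorted >=%R (decr x).
Proof. by apply: sort_sorted => u v; rewrite /= orbC le_total. Qed.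

Lemma big_decr n (x : 'I_n -> R) (F : R -> R) :
  \sum_(v <- decr x) F v = \sum_(i < n) F (x i).
Proof. by rewrite (perm_big _ (permEl (perm_sort _ _))) big_map big_enum. Qed.

Lemma majorized_prefix n (p q : 'I_n -> R) : majorized p q ->
  forall k, (k <= n)%N -> \sum_(i < k) (decr p)`_i <= \sum_(i < k) (decr q)`_i.
Proof.
case=> prefix_le sum_eq [|k] le_kn; first by rewrite !big_ord0.
have [lt_k_n1 | le_n1_k] := ltnP k n.-1; first by apply: prefix_le; lia.
have -> : k.+1 = n by lia.
have sum_decr (x : 'I_n -> R) : \sum_(i < n) (decr x)`_i = \sum_(i < n) x i.
  by rewrite -(big_decr x id) (big_nth 0) big_mkord size_decr.
by rewrite !sum_decr sum_eq.
Qed.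

Lemma majorized_sum_pos_part n (p q : 'I_n -> R) (t : R) : majorized p q ->
  \sum_(i < n) Num.max (p i - t) 0 <= \sum_(i < n) Num.max (q i - t) 0.
Proof.
move=> pq; rewrite -(big_decr p (fun v => Num.max (v - t) 0)).
rewrite -(big_decr q (fun v => Num.max (v - t) 0)).
have [k] := sum_pos_part_sorted t (sorted_decr p); rewrite size_decr => le_kn ->.
rewrite (big_nth 0) big_mkord size_decr.
apply: (@le_trans _ _ (\sum_(i < k) Num.max ((decr q)`_i - t) 0)).
  rewrite sumrB; apply: (@le_trans _ _ (\sum_(i < k) ((decr q)`_i - t))).
    by rewrite sumrB lerD2r majorized_prefix.
  by apply: ler_sum => i _; rewrite le_max lexx.
rewrite (big_ord_widen n (fun i => Num.max ((decr q)`_i - t) 0) le_kn).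
rewrite [leRHS](bigID (fun i : 'I_n => (i < k)%N)) /= lerDl.
by apply: sumr_ge0 => i _; rewrite le_max lexx orbT.
Qed.

Lemma majorized_sum_interp a n (p q : 'I_n -> R) :
  convex_seq a -> (forall i, 1 <= p i) -> (forall i, 1 <= q i) -> majorized p q ->
  \sum_(i < n) interp a (p i) <= \sum_(i < n) interp a (q i).
Proof.
move=> convex_a p_ge1 q_ge1 pq.
set N := \max_(i < n) maxn (flo (p i)) (flo (q i)).
have le_max_N i : (maxn (flo (p i)) (flo (q i)) <= N.+1)%N.
  exact: leq_trans (leq_bigmax i) (leqnSn N).
under eq_bigr => i _ do rewrite (interp_hinge_expansion a (p_ge1 i)
  (leq_trans (leq_maxl _ _) (le_max_N i))).
under [leRHS]eq_bigr => i _ do rewrite (interp_hinge_expansion a (q_ge1 i)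
  (leq_trans (leq_maxr _ _) (le_max_N i))).
rewrite !big_split /= lerD //.
  by case: pq => _ sum_eq; rewrite -!mulr_sumr !sumrB sum_eq.
rewrite exchange_big [leRHS]exchange_big /=.
apply: ler_sum => k _; rewrite -!mulr_sumr ler_wpM2l ?majorized_sum_pos_part //.
by rewrite subr_ge0 convex_a.
Qed.

Lemma majorized_pair (i : nat) :
  majorized (fun _ : 'I_2 => i.+1%:R : R)
            (fun j : 'I_2 => if j == ord0 then i.+2%:R else i%:R).
Proof.
have sorted_pair (u v : R) : v <= u -> sort (fun u v : R => v <= u) [:: u; v] = [:: u; v].
  by move=> le_vu; rewrite sorted_sort //= ?le_vu //; apply: ge_trans.
rewrite /majorized /decr !enum_ordSl enum_ord0 /= !sorted_pair ?ler_nat //; last by lia.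
split=> [k /andP[k_ge1 k_le1] | ].
  have -> : k = 1%N by lia.
  by rewrite !big_ord_recl !big_ord0 /= !addr0 ler_nat.
by rewrite !big_ord_recl !big_ord0 /= -!natr1; ring.
Qed.

End MajorizationInterpolation.

Theorem theorem4p7 (R : realType) (a : nat -> R) :
  convex_seq a <->
  (forall (n : nat), (2 <= n)%N ->
   forall p q : 'I_n -> R,
     (forall i, 1 <= p i) -> (forall i, 1 <= q i) ->
     majorized p q ->
     \sum_(i < n) (a (flo (p i)) - a (flo (q i)))
       <= \sum_(i < n) (fracpart (q i) * Delta a (flo (q i))
                        - fracpart (p i) * Delta a (flo (p i)))).
Proof.
split=> [convex_a n _ p q p_ge1 q_ge1 pq | ineq i i_ge1].
  by rewrite sum_interpE majorized_sum_interp.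
have p_ge1 (j : 'I_2) : 1 <= (i.+1%:R : R) by rewrite ler1n.
have q_ge1 (j : 'I_2) : 1 <= (if j == ord0 then i.+2%:R else i%:R : R).
  by case: ifP; rewrite ler1n.
have := ineq 2%N isT _ _ p_ge1 q_ge1 (majorized_pair R i).
rewrite sum_interpE !big_ord_recl !big_ord0 /= !interp_nat /Delta => le2.
by clear -le2; lra.
Qed.
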